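(* Let $W$ and $A$ be finite sets and $V\subseteq W$. Let $\mathcal{P}\subseteq\Delta_W(V)$ be a convex set. Let $\mathcal{G}\subseteq\Delta_{W,A}$ satisfy $\mathcal{G}|_V=\prod_{w\in V}\mathcal{G}_w\subseteq\Delta_{V,A}$, where $\mathcal{G}_w\subseteq\Delta_A$ is a convex set for all $w\in V$. Then $\mathcal{P}\ast\mathcal{G}\subseteq\Delta_{W\times A}$ is convex.
   Context: $\Delta_X$ is the probability simplex on a finite set $X$; $\Delta_{X,Y}=\prod_{x\in X}\Delta_Y$ is the set of Markov kernels $g(y|x)$. For $\mathcal{P}\subseteq\Delta_W$ and $\mathcal{G}\subseteq\Delta_{W,A}$, $\mathcal{P}\ast\mathcal{G}=\{q(w,a)=p(w)g(a|w)\in\Delta_{W\times A}\colon p\in\mathcal{P},g\in\mathcal{G}\}$. For $V\subseteq W$, $\Delta_W(V)=\{p\in\Delta_W\colon \{w\colon p(w)>0\}\subseteq V\}$. For $\mathcal{G}\subseteq\Delta_{W,A}$, $\mathcal{G}|_V=\{h\in\Delta_{V,A}\colon \text{there is } g\in\mathcal{G} \text{ with } h(\cdot|w)=g(\cdot|w)\text{ for all }w\in V\}$. *)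

From HB Require Import structures.
From mathcomp Require Import all_boot all_order all_algebra.
Set Implicit Arguments. Unset Strict Implicit. Unset Printing Implicit Defensive.
Import Order.TTheory GRing.Theory Num.Theory.
Local Open Scope ring_scope.

Section Defs.
Variable R : realFieldType.

Definition is_dist (X : finType) (p : {ffun X -> R}) : Prop :=
  (forall x, 0 <= p x) /\ \sum_(x : X) p x = 1.

Definition is_kernel (X Y : finType) (g : {ffun X -> {ffun Y -> R}}) : Prop :=
  forall x, is_dist (g x).

Definition simplex_on (W : finType) (V : {set W}) (p : {ffun W -> R}) : Prop :=
  is_dist p /\ (forall w, 0 < p w -> w \in V).

Definition convex_set (X : finType) (S : {ffun X -> R} -> Prop) : Prop :=
  forall p q t, S p -> S q -> 0 <= t -> t <= 1 ->
    S [ffun x => t * p x + (1 - t) * q x].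

Definition comp_set (W A : finType) (P : {ffun W -> R} -> Prop)
  (G : {ffun W -> {ffun A -> R}} -> Prop) (q : {ffun (W * A)%type -> R}) : Prop :=
  exists p g, P p /\ G g /\ forall wa : W * A, q wa = p wa.1 * g wa.1 wa.2.

Definition restr_set (W A : finType) (G : {ffun W -> {ffun A -> R}} -> Prop)
  (V : {set W}) (h : {ffun {w : W | w \in V} -> {ffun A -> R}}) : Prop :=
  is_kernel h /\ exists g, G g /\ forall w : {w : W | w \in V}, h w = g (val w).

End Defs.

(* Given q_i(w,a) = p_i(w) g_i(a|w) for i = 1, 2 and t in [0,1], the mixture
   t q_1 + (1-t) q_2 factors as p(w) g(a|w) with p = t p_1 + (1-t) p_2 and, where
   p(w) > 0, g(.|w) = l g_1(.|w) + (1-l) g_2(.|w) for l = t p_1(w) / p(w).  Each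
   g(.|w) with w in V thus lies in the convex set G_w, so by the product structure
   of G|_V some kernel of G agrees with g on V; off V both p_1 and p_2 vanish. *)
From mathcomp Require Import all_boot all_order all_algebra.
From mathcomp Require Import ring lra.
Set Implicit Arguments. Unset Strict Implicit. Unset Printing Implicit Defensive.
Import Order.TTheory GRing.Theory Num.Theory.
Local Open Scope ring_scope.

Section WeightedMix.
Variables (R : realFieldType) (X : finType).

(* When both weights vanish the value is irrelevant; x is returned. *)
Definition mix (a b : R) (x y : {ffun X -> R}) : {ffun X -> R} :=
  if a + b == 0 then x else [ffun i => a / (a + b) * x i + (1 - a / (a + b)) * y i].

Lemma mixE (a b : R) (x y : {ffun X -> R}) (i : X) :
  0 <= a -> 0 <= b -> (a + b) * mix a b x y i = a * x i + b * y i.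
Proof.
move=> a_ge0 b_ge0; rewrite /mix; case: eqP => [ab0 | /eqP ab_neq0].
  have a0 : a = 0 by lra.
  have b0 : b = 0 by lra.
  by rewrite ab0 a0 b0 !mul0r addr0.
by rewrite ffunE; field.
Qed.

Lemma mix_convex (S : {ffun X -> R} -> Prop) (a b : R) (x y : {ffun X -> R}) :
  convex_set S -> S x -> S y -> 0 <= a -> 0 <= b -> S (mix a b x y).
Proof.
move=> S_convex Sx Sy a_ge0 b_ge0; rewrite /mix; case: eqP => [// | /eqP ab_neq0].
have ab_gt0 : 0 < a + b by rewrite lt_def ab_neq0 addr_ge0.
apply: S_convex => //; [exact: divr_ge0 (ltW ab_gt0) | ].
by rewrite ler_pdivrMr // mul1r lerDl.
Qed.

End WeightedMix.

Lemma simplex_on_notin (R : realFieldType) (W : finType) (V : {set W})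
    (p : {ffun W -> R}) (w : W) :
  simplex_on V p -> w \notin V -> p w = 0.
Proof.
move=> [[p_ge0 _] supp_p] wNV; apply/eqP; rewrite eq_le p_ge0 andbT leNgt.
by apply: contra wNV => /supp_p.
Qed.

Section ProductRestriction.
Variables (R : realFieldType) (W A : finType) (V : {set W}).
Variables (G : {ffun W -> {ffun A -> R}} -> Prop)
          (Gw : {w : W | w \in V} -> {ffun A -> R} -> Prop).
Hypothesis G_kernel : forall g, G g -> is_kernel g.
Hypothesis restr_G_prod : forall h : {ffun {w : W | w \in V} -> {ffun A -> R}},
  @restr_set R W A G V h <-> (forall w, Gw w (h w)).

Lemma restr_mem (g : {ffun W -> {ffun A -> R}}) (w : {w : W | w \in V}) :
  G g -> Gw w (g (val w)).
Proof.
move=> Gg; have restr_g : @restr_set R W A G V [ffun w => g (val w)].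
  split; first by move=> w'; rewrite ffunE; exact: G_kernel.
  by exists g; split => // w'; rewrite ffunE.
by have := (restr_G_prod _).1 restr_g w; rewrite ffunE.
Qed.

Lemma restr_extend (h : {ffun {w : W | w \in V} -> {ffun A -> R}}) :
  (forall w, Gw w (h w)) -> exists2 g, G g & forall w, g (val w) = h w.
Proof.
by move=> /restr_G_prod [_ [g [Gg hg]]]; exists g => // w; rewrite hg.
Qed.

End ProductRestriction.

Theorem proposition7 (R : realFieldType) (W A : finType) (V : {set W})
  (P : {ffun W -> R} -> Prop) (G : {ffun W -> {ffun A -> R}} -> Prop)
  (Gw : {w : W | w \in V} -> {ffun A -> R} -> Prop)
  (HP : forall p, P p -> simplex_on V p)
  (HPc : convex_set P)
  (HG : forall g, G g -> is_kernel g)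
  (HGw : forall w p, Gw w p -> is_dist p)
  (HGwc : forall w, convex_set (Gw w))
  (Hprod : forall h : {ffun {w : W | w \in V} -> {ffun A -> R}},
     @restr_set R W A G V h <-> (forall w, Gw w (h w))) :
  convex_set (comp_set P G).
Proof.
move=> q1 q2 t [p1 [g1 [Pp1 [Gg1 q1E]]]] [p2 [g2 [Pp2 [Gg2 q2E]]]] t_ge0 t_le1.
have [[[p1_ge0 _] _] [[p2_ge0 _] _]] := (HP _ Pp1, HP _ Pp2).
have a_ge0 w : 0 <= t * p1 w by rewrite mulr_ge0.
have b_ge0 w : 0 <= (1 - t) * p2 w by rewrite mulr_ge0 ?subr_ge0.
pose mixV := [ffun w : {w : W | w \in V} =>
  mix (t * p1 (val w)) ((1 - t) * p2 (val w)) (g1 (val w)) (g2 (val w))].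
have [g Gg gE] : exists2 g, G g & forall w, g (val w) = mixV w.
  apply: (restr_extend Hprod) => w; rewrite ffunE.
  by apply: mix_convex => //; apply: (restr_mem HG Hprod).
exists [ffun w => t * p1 w + (1 - t) * p2 w], g; split; first exact: HPc.
split=> // -[w a]; rewrite !ffunE q1E q2E /=.
have [wV | wNV] := boolP (w \in V).
  by rewrite (gE (exist _ w wV)) ffunE mixE // !mulrA.
rewrite (simplex_on_notin (HP _ Pp1) wNV) (simplex_on_notin (HP _ Pp2) wNV).
by rewrite !(mulr0, mul0r, addr0).
Qed.
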